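(* Let $X',X''$ be a disjoint cover of an index set $X$, $\Pi:=\Pi X$, $\Pi':=\Pi X'$, $\Pi'':=\Pi X''$, so $\Pi=\Pi'\times\Pi''$. Let $\mu$ assign to every subset $A$ of $\Pi$, of $\Pi'$ or of $\Pi''$ a subset $\mu(A)\subseteq A$, and define: $B\subseteq A$ is big iff $\mu(A)\subseteq B\subseteq A$. For $\Sigma\subseteq\Pi$ write $\Sigma':=\Sigma\upharpoonright X'$, $\Sigma'':=\Sigma\upharpoonright X''$. Consider the conditions (each universally quantified over all sets of the indicated kinds): (S*1) for $\Sigma'\subseteq\Pi'$, $\Sigma''\subseteq\Pi''$, $\Delta\subseteq\Sigma'\times\Sigma''$: $\Delta\subseteq\Sigma'\times\Sigma''$ is big iff there is $\Gamma'\times\Gamma''\subseteq\Delta$ with $\Gamma'\subseteq\Sigma'$ and $\Gamma''\subseteq\Sigma''$ big; (S*2) for $\Gamma\subseteq\Sigma\subseteq\Pi$: if $\Gamma\subseteq\Sigma$ is big then $\Gamma\upharpoonright X'\subseteq\Sigma\upharpoonright X'$ is big; (S*3) for $A\subseteq\Sigma\subseteq\Pi$: if $A\subseteq\Sigma$ is big then there is a big $B\subseteq\Pi'\times\Sigma''$ with $B\upharpoonright X''\subseteq A\upharpoonright X''$; ($\mu$*1) for $\Sigma'\subseteq\Pi'$, $\Sigma''\subseteq\Pi''$: $\mu(\Sigma'\times\Sigma'')=\mu(\Sigma')\times\mu(\Sigma'')$; ($\mu$*2) for $\Sigma\subseteq\Pi$ and $\Gamma$: if $\mu(\Sigma)\subseteq\Gamma$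 then $\mu(\Sigma\upharpoonright X')\subseteq\Gamma\upharpoonright X'$; ($\mu$*3) for $\Sigma\subseteq\Pi$: $\mu(\Pi'\times\Sigma'')\upharpoonright X''\subseteq\mu(\Sigma)\upharpoonright X''$. Then (S*$i$) is equivalent to ($\mu$*$i$) for $i=1,2,3$.
   Context: $\Pi X$ denotes the product of the value sets over the indices in $X$; for a set $\Sigma$ of sequences and $Y\subseteq X$, $\Sigma\upharpoonright Y$ is the set of restrictions of its elements to $Y$. *)

From mathcomp Require Import all_boot.
From mathcomp Require Export boolp classical_sets.

Set Implicit Arguments.
Unset Strict Implicit.
Unset Printing Implicit Defensive.

Local Open Scope classical_set_scope.

Definition PiSub (I : Type) (V : I -> Type) (P : I -> Prop) : Type :=
  forall j : {i : I | P i}, V (proj1_sig j).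

Definition restr (I : Type) (V : I -> Type) (P : I -> Prop)
  (f : forall i, V i) : PiSub V P :=
  fun j => f (proj1_sig j).

Definition restrS (I : Type) (V : I -> Type) (P : I -> Prop)
  (S : set (forall i, V i)) : set (PiSub V P) :=
  @restr I V P @` S.

(* Product S' x S'' of S' <= Pi X' and S'' <= Pi X'', viewed as a subset of
   Pi X = Pi X' x Pi X'' (the identification via restriction). *)
Definition prodS (I : Type) (V : I -> Type) (X' X'' : I -> Prop)
  (S' : set (PiSub V X')) (S'' : set (PiSub V X'')) : set (forall i, V i) :=
  [set f | S' (@restr I V X' f) /\ S'' (@restr I V X'' f)].

Definition big (T : Type) (mu : set T -> set T) (A B : set T) : Prop :=
  mu A `<=` B /\ B `<=` A.

Arguments restr {I V} P f _.
Arguments restrS {I V} P S _.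
Arguments prodS {I V X' X''} S' S'' _.
Arguments big {T} mu A B.

From mathcomp Require Import all_boot.
From mathcomp Require Import boolp classical_sets.

(* Since [mu A `<=` A], the big subsets of [A] are exactly the sets between
   [mu A] and [A]; in particular [mu A] is the least big subset of [A].  Each
   condition (S*i) quantifies over big sets, and instantiating it at the least
   one gives (mu*i); conversely (mu*i) propagates to every big set because
   products and restrictions are monotone.  Nothing else about [Pi X] is used:
   in particular [X'] and [X''] need not cover [X] nor be disjoint. *)

Local Open Scope classical_set_scope.

Lemma big_mu {T : Type} {mu : set T -> set T} :
  (forall A, mu A `<=` A) -> forall A, big mu A (mu A).
Proof. by split. Qed.

Lemma bigE {T : Type} {mu : set T -> set T} {A B : set T} :
  B `<=` A -> big mu A B <-> mu A `<=` B.
Proof. by move=> BA; split=> [[]|]. Qed.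

Section BigSets.

Context {T T' T'' U : Type}.
Context {mu : set T -> set T} {mu' : set T' -> set T'} {mu'' : set T'' -> set T''}.
Hypothesis mu_sub : forall A, mu A `<=` A.

Context {prod : set T' -> set T'' -> set T}.
Hypothesis prod_subset : forall G' G'' S' S'',
  G' `<=` S' -> G'' `<=` S'' -> prod G' G'' `<=` prod S' S''.
Arguments prod_subset {G' G'' S' S''}.
Hypothesis mu'_sub : forall A, mu' A `<=` A.
Hypothesis mu''_sub : forall A, mu'' A `<=` A.

Lemma big_prod_iff_mu_prod :
  (forall S' S'' D, D `<=` prod S' S'' ->
     (big mu (prod S' S'') D <->
      exists G' G'', [/\ prod G' G'' `<=` D, big mu' S' G' & big mu'' S'' G'']))
  <-> (forall S' S'', mu (prod S' S'') = prod (mu' S') (mu'' S'')).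
Proof.
split=> [bigP S' S'' | muP S' S'' D DS].
- have mu_prod_sub : prod (mu' S') (mu'' S'') `<=` prod S' S''.
    exact: prod_subset.
  apply/seteqP; split.
  + apply/(bigE mu_prod_sub)/(bigP _ _ _ mu_prod_sub).
    by exists (mu' S'), (mu'' S''); split => //; exact: big_mu.
  + have [G' [G'' [GD [muG' _] [muG'' _]]]] :=
      (bigP S' S'' _ (mu_sub _)).1 (big_mu mu_sub _).
    exact: subset_trans (prod_subset muG' muG'') GD.
- rewrite (bigE DS) muP; split=> [muD | [G' [G'' [GD [muG' _] [muG'' _]]]]].
  + by exists (mu' S'), (mu'' S''); split => //; exact: big_mu.
  + exact: subset_trans (prod_subset muG' muG'') GD.
Qed.

Context {r : set T -> set U}.
Hypothesis r_subset : forall A B, A `<=` B -> r A `<=` r B.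
Arguments r_subset {A B}.

Lemma big_map_iff_mu_map (nu : set U -> set U) :
  (forall G S, G `<=` S -> big mu S G -> big nu (r S) (r G))
  <-> (forall S G, mu S `<=` G -> nu (r S) `<=` r G).
Proof.
split=> [bigP S G muG | muP G S GS [muG _]].
- have GS_sub : G `&` S `<=` S by apply: subIsetr.
  have muGS : mu S `<=` G `&` S by move=> x Sx; split; [exact: muG | exact: mu_sub].
  apply: subset_trans (r_subset (@subIsetl _ G S)).
  exact: (bigP _ _ GS_sub (conj muGS GS_sub)).1.
- by split; [exact: muP | exact: r_subset].
Qed.

Lemma big_proj_iff_mu_proj (P : set T -> set T) :
  (forall A S, A `<=` S -> big mu S A ->
     exists B, big mu (P S) B /\ r B `<=` r A)
  <-> (forall S, r (mu (P S)) `<=` r (mu S)).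
Proof.
split=> [bigP S | muP A S AS [muA _]].
- have [B [[muB _] rBA]] := bigP _ _ (mu_sub S) (big_mu mu_sub S).
  exact: subset_trans (r_subset muB) rBA.
- exists (mu (P S)); split; first exact: big_mu.
  exact: subset_trans (muP S) (r_subset muA).
Qed.

End BigSets.

Lemma prodS_subset (I : Type) (V : I -> Type) (X' X'' : I -> Prop)
    (G' : set (PiSub V X')) (G'' : set (PiSub V X''))
    (S' : set (PiSub V X')) (S'' : set (PiSub V X'')) :
  G' `<=` S' -> G'' `<=` S'' -> prodS G' G'' `<=` prodS S' S''.
Proof. by move=> GS' GS'' f [/GS' ? /GS'' ?]. Qed.

Theorem fact4p4 (I : Type) (V : I -> Type) (X' X'' : I -> Prop)
  (hcover : forall i, X' i \/ X'' i)
  (hdisj : forall i, ~ (X' i /\ X'' i))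
  (mu : set (forall i, V i) -> set (forall i, V i))
  (mu' : set (PiSub V X') -> set (PiSub V X'))
  (mu'' : set (PiSub V X'') -> set (PiSub V X''))
  (hmu : forall A, mu A `<=` A)
  (hmu' : forall A, mu' A `<=` A)
  (hmu'' : forall A, mu'' A `<=` A) :
  ((forall (S' : set (PiSub V X')) (S'' : set (PiSub V X''))
       (D : set (forall i, V i)),
      D `<=` prodS S' S'' ->
      (big mu (prodS S' S'') D <->
       exists (G' : set (PiSub V X')) (G'' : set (PiSub V X'')),
         [/\ prodS G' G'' `<=` D, big mu' S' G' & big mu'' S'' G'']))
   <->
   (forall (S' : set (PiSub V X')) (S'' : set (PiSub V X'')),
      mu (prodS S' S'') = prodS (mu' S') (mu'' S'')))
  /\
  ((forall G S : set (forall i, V i),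
      G `<=` S -> big mu S G -> big mu' (restrS X' S) (restrS X' G))
   <->
   (forall S G : set (forall i, V i),
      mu S `<=` G -> mu' (restrS X' S) `<=` restrS X' G))
  /\
  ((forall A S : set (forall i, V i),
      A `<=` S -> big mu S A ->
      exists B : set (forall i, V i),
        big mu (prodS (@setT (PiSub V X')) (restrS X'' S)) B /\
        restrS X'' B `<=` restrS X'' A)
   <->
   (forall S : set (forall i, V i),
      restrS X'' (mu (prodS (@setT (PiSub V X')) (restrS X'' S))) `<=` restrS X'' (mu S))).
Proof.
split; [|split].
- exact (big_prod_iff_mu_prod hmu (@prodS_subset I V X' X'') hmu' hmu'').
- exact (big_map_iff_mu_map hmu (fun A B => @image_subset _ _ (restr X') A B) mu').
- exact (big_proj_iff_mu_proj hmu (fun A B => @image_subset _ _ (restr X'') A B)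
    (fun S => prodS [set: PiSub V X'] (restrS X'' S))).
Qed.
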